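(* For $s\in\mu_r$, $v\in\mathcal{A}_1$, $w\in\mathcal{A}_r$: \[ vz\diamond_s w=v\diamond_s wz=(v\diamond_s w)z . \]
   Context: Fix $r\ge1$, $\mu_r$ the $r$th roots of unity, $\mathcal{A}_r=\mathbb{Q}\langle x,y_s\mid s\in\mu_r\rangle$ the free noncommutative polynomial algebra over $\mathbb{Q}$, $\mathcal{A}_1=\mathbb{Q}\langle x,y\rangle$ with $y=y_1$. Write $z=x+y_1$, $z_s=x+y_s$, $\delta(1)=0$, $\delta(s)=1$ ($s\ne1$), $z_s^\delta=x+\delta(s)y_s$, $z_{k,s}=x^{k-1}y_s$. Let $\varphi$ be the algebra automorphism of $\mathcal{A}_r$ with $\varphi(x)=z$, $\varphi(y_s)=\delta(s)y_s-y_1$. Every word is uniquely $z_{k_1,s_1}\cdots z_{k_l,s_l}x^a$ ($l,a\ge0$); define linear maps $\mathcal{I}(z_{k_1,s_1}\cdots z_{k_l,s_l}x^a)=z_{k_1,s_1}z_{k_2,s_1s_2}\cdots z_{k_l,s_1\cdots s_l}x^a$ and $M_s(z_{k_1,s_1}\cdots z_{k_l,s_l}x^a)=z_{k_1,ss_1}z_{k_2,s_2}\cdots z_{k_l,s_l}x^a$ (with $M_s(x^a)=x^a$), and $\psi_s=\varphi\circ\mathcal{I}\circ M_s$. Diamond product: for $s\in\mu_r$, $\diamond_s:\mathcal{A}_1\times\mathcal{A}_r\to\mathcal{A}_r$ is the $\mathbb{Q}$-bilinear map defined recursively on words by $1\diamond_s w=w$, $v\diamond_s1=\psi_s\varphi(v)$,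 and for $v\in\mathcal{A}_1$, $w\in\mathcal{A}_r$, $1\ne t\in\mu_r$: $vx\diamond_s wx=(v\diamond_s wx)x-(vy\diamond_s w)x$; $vy\diamond_s wx=(v\diamond_s wx)y+(vy\diamond_s w)x$; $vx\diamond_s wy=(v\diamond_s wy)x+(vx\diamond_s w)y$; $vy\diamond_s wy=(v\diamond_s wy)y-(vx\diamond_s w)y$; $vx\diamond_s wy_t=(v\diamond_s wy_t)x+(v\diamond_s wz_t)y_t-(vy\diamond_s w)y_t$; $vy\diamond_s wy_t=(v\diamond_s wy_t)y-(v\diamond_s wz_t)y_t+(vy\diamond_s w)y_t$. *)

From mathcomp Require Import all_boot all_algebra.
Set Implicit Arguments. Unset Strict Implicit. Unset Printing Implicit Defensive.
Import GRing.Theory.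
Local Open Scope ring_scope.

(* Roots of unity.  We fix r = n.+1 >= 1 and identify the cyclic group     *)
(* mu_r with Z/rZ = 'I_n.+1 via zeta^k <-> k, where zeta = exp(2 pi i/r).  *)
(* Multiplication in mu_r is addition in 'I_n.+1, and 1 in mu_r is 0.     *)
Definition mu (n : nat) := 'I_n.+1.
Definition mu_mul n (s t : mu n) : mu n := (s + t)%R.
Definition mu_one n : mu n := 0%R.
Definition delta n (s : mu n) : rat := if s == mu_one n then 0 else 1.

(* Letters of A_r: None = x, Some s = y_s.  Letters of A_1: false = x,    *)
(* true = y (= y_1).                                                      *)
Definition letterR n := option (mu n).
Definition letter1 := bool.

(* Elements of Q<L> are represented as formal finite linear combinations  *)
(* of words (lists of (coefficient, word)); two representations denote   *)
(* the same element iff they have the same coefficient on every word.     *)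
Definition ncpoly (L : Type) := seq (rat * seq L).

Definition coef (L : eqType) (p : ncpoly L) (w : seq L) : rat :=
  \sum_(a <- p | a.2 == w) a.1.
Definition peq (L : eqType) (p q : ncpoly L) : Prop :=
  forall w, coef p w = coef q w.

Definition pword L (w : seq L) : ncpoly L := [:: (1, w)].
Definition pone L : ncpoly L := pword [::].
Definition padd L (p q : ncpoly L) : ncpoly L := p ++ q.
Definition pscale L (c : rat) (p : ncpoly L) : ncpoly L :=
  [seq (c * a.1, a.2) | a <- p].
Definition psub L (p q : ncpoly L) : ncpoly L := padd p (pscale (-1) q).
Definition pmul L (p q : ncpoly L) : ncpoly L :=
  [seq (a.1 * b.1, a.2 ++ b.2) | a <- p, b <- q].
Definition plin L L' (f : seq L -> ncpoly L') (p : ncpoly L) : ncpoly L' :=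
  flatten [seq pscale a.1 (f a.2) | a <- p].

Definition lx n : letterR n := None.
Definition ly n (s : mu n) : letterR n := Some s.

Definition zR n : ncpoly (letterR n) := padd (pword [:: lx n]) (pword [:: ly (mu_one n)]).
Definition zt n (t : mu n) : ncpoly (letterR n) := padd (pword [:: lx n]) (pword [:: ly t]).
Definition z1 : ncpoly letter1 := padd (pword [:: false]) (pword [:: true]).

Definition emb1 n (b : letter1) : letterR n := if b then ly (mu_one n) else lx n.
Definition pemb n (p : ncpoly letter1) : ncpoly (letterR n) :=
  [seq (a.1, map (@emb1 n) a.2) | a <- p].

Definition phi_letter n (l : letterR n) : ncpoly (letterR n) :=
  match l with
  | None => zR n
  | Some s => psub (pscale (delta s) (pword [:: ly s])) (pword [:: ly (mu_one n)])
  end.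
Definition phi_word n (w : seq (letterR n)) : ncpoly (letterR n) :=
  foldr (fun l acc => pmul (phi_letter l) acc) (@pone _) w.
Definition phi n (p : ncpoly (letterR n)) : ncpoly (letterR n) := plin (@phi_word n) p.

(* I on words: y_{s_j} |-> y_{s_1 ... s_j} *)
Fixpoint I_word n (acc : mu n) (w : seq (letterR n)) : seq (letterR n) :=
  match w with
  | [::] => [::]
  | None :: w' => None :: I_word acc w'
  | Some t :: w' => Some (mu_mul acc t) :: I_word (mu_mul acc t) w'
  end.
Fixpoint M_word n (s : mu n) (w : seq (letterR n)) : seq (letterR n) :=
  match w with
  | [::] => [::]
  | None :: w' => None :: M_word s w'
  | Some t :: w' => Some (mu_mul s t) :: w'
  end.
Definition psi_word n (s : mu n) (w : seq (letterR n)) : ncpoly (letterR n) :=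
  phi_word (I_word (mu_one n) (M_word s w)).
Definition psi n (s : mu n) (p : ncpoly (letterR n)) : ncpoly (letterR n) :=
  plin (psi_word s) p.

(* The diamond product on words, by recursion on k = |v| + |w|          *)
(* (k is fuel; it is always called with k = size v + size w).           *)
Fixpoint dia_fuel n (s : mu n) (k : nat) (v : seq letter1) (w : seq (letterR n))
  {struct k} : ncpoly (letterR n) :=
  if v is [::] then pword w else
  if w is [::] then psi s (phi (pemb n (pword v))) else
  match k with
  | 0 => [::]
  | k'.+1 =>
    match rev v, rev w with
    | b :: rv0, l :: rw0 =>
      let v0 := rev rv0 in let w0 := rev rw0 in
      let X := pword [:: lx n] in let Y := pword [:: ly (mu_one n)] in
      match b, l with
      | false, None => (* vx <> wx = (v <> wx)x - (vy <> w)x *)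
          psub (pmul (dia_fuel s k' v0 w) X) (pmul (dia_fuel s k' (rcons v0 true) w0) X)
      | true, None => (* vy <> wx = (v <> wx)y + (vy <> w)x *)
          padd (pmul (dia_fuel s k' v0 w) Y) (pmul (dia_fuel s k' (rcons v0 true) w0) X)
      | false, Some t =>
          if t == mu_one n then (* vx <> wy = (v <> wy)x + (vx <> w)y *)
            padd (pmul (dia_fuel s k' v0 w) X) (pmul (dia_fuel s k' (rcons v0 false) w0) Y)
          else (* vx <> wy_t = (v <> wy_t)x + (v <> wz_t)y_t - (vy <> w)y_t *)
            let Yt := pword [:: ly t] in
            psub (padd (pmul (dia_fuel s k' v0 w) X)
                       (pmul (padd (dia_fuel s k' v0 (rcons w0 (lx n)))
                                   (dia_fuel s k' v0 (rcons w0 (ly t)))) Yt))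
                 (pmul (dia_fuel s k' (rcons v0 true) w0) Yt)
      | true, Some t =>
          if t == mu_one n then (* vy <> wy = (v <> wy)y - (vx <> w)y *)
            psub (pmul (dia_fuel s k' v0 w) Y) (pmul (dia_fuel s k' (rcons v0 false) w0) Y)
          else (* vy <> wy_t = (v <> wy_t)y - (v <> wz_t)y_t + (vy <> w)y_t *)
            let Yt := pword [:: ly t] in
            padd (psub (pmul (dia_fuel s k' v0 w) Y)
                       (pmul (padd (dia_fuel s k' v0 (rcons w0 (lx n)))
                                   (dia_fuel s k' v0 (rcons w0 (ly t)))) Yt))
                 (pmul (dia_fuel s k' (rcons v0 true) w0) Yt)
      end
    | _, _ => [::]
    end
  end.

Definition dia_word n (s : mu n) (v : seq letter1) (w : seq (letterR n)) :=
  dia_fuel s (size v + size w) v w.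

Definition diamond n (s : mu n) (p : ncpoly letter1) (q : ncpoly (letterR n))
  : ncpoly (letterR n) :=
  flatten [seq pscale (a.1 * b.1) (dia_word s a.2 b.2) | a <- p, b <- q].

From mathcomp Require Import all_boot all_algebra.
From mathcomp Require Import ring lra.
Set Implicit Arguments. Unset Strict Implicit. Unset Printing Implicit Defensive.
Import GRing.Theory.
Local Open Scope ring_scope.

(* equality through linear functionals: every g : seq L -> rat extends to  *)
(* [peval g], and [peqP] shows that peq p q holds iff peval g p = peval g q  *)
(* for every g.  All algebraic operations are then described by how they   *)
(* transform functionals, which reduces the theorem to identities on words. *)
(* Writing D for the diamond product of words and z = x + y_1, the two word *)
(* identities are                                                           *)
(*   (A)  D(vx, w) + D(vy, w) = D(v, w) z        [dia_mulz_l]               *)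
(*   (B)  D(v, wx) + D(v, wy_1) = D(v, w) z      [dia_mulz_r]               *)
(* (A) follows by adding the two defining recursions with the same last     *)
(* letter of w (everything cancels), or, when w is empty, from the facts    *)
(* phi(ux) + phi(uy_1) = phi(u) x and psi_s(ux) = psi_s(u) z.  (B) follows  *)
(* by induction on v, using (A) for the inner terms.  Bilinearity of the    *)
(* diamond product then lifts (A) and (B) to the theorem.                   *)

Definition peval (L : Type) (g : seq L -> rat) (p : ncpoly L) : rat :=
  \sum_(a <- p) a.1 * g a.2.

Section Evaluation.
Variable L : Type.
Implicit Types (g : seq L -> rat) (p q : ncpoly L).

Lemma peval_padd g p q : peval g (padd p q) = peval g p + peval g q.
Proof. by rewrite /peval big_cat. Qed.

Lemma peval_pscale g c p : peval g (pscale c p) = c * peval g p.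
Proof. by rewrite /peval big_map mulr_sumr; apply: eq_bigr => a _ /=; ring. Qed.

Lemma peval_psub g p q : peval g (psub p q) = peval g p - peval g q.
Proof. by rewrite /psub peval_padd peval_pscale; ring. Qed.

Lemma peval_pword g w : peval g (pword w) = g w.
Proof. by rewrite /peval big_seq1 mul1r. Qed.

Lemma eq_peval g g' p : g =1 g' -> peval g p = peval g' p.
Proof. by move=> eq_g; apply: eq_bigr => a _; rewrite eq_g. Qed.

Lemma pevalD g g' p : peval (fun x => g x + g' x) p = peval g p + peval g' p.
Proof. by rewrite /peval -big_split; apply: eq_bigr => a _ /=; ring. Qed.

Lemma peval_pmul g p q :
  peval g (pmul p q) = peval (fun x => peval (fun y => g (x ++ y)) q) p.
Proof.
rewrite /peval /pmul big_flatten big_map; apply: eq_bigr => a _.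
by rewrite big_map mulr_sumr; apply: eq_bigr => b _ /=; ring.
Qed.

Lemma peval_pmul_word g p u : peval g (pmul p (pword u)) = peval (fun x => g (x ++ u)) p.
Proof. by rewrite peval_pmul; apply: eq_peval => x; rewrite peval_pword. Qed.

Lemma peval_pmul_sum2 g p (a b : L) :
  peval g (pmul p (padd (pword [:: a]) (pword [:: b]))) =
  peval (fun x => g (x ++ [:: a])) p + peval (fun x => g (x ++ [:: b])) p.
Proof.
rewrite peval_pmul -pevalD; apply: eq_peval => x.
by rewrite peval_padd !peval_pword.
Qed.

End Evaluation.

Lemma peval_plin (L L' : Type) (f : seq L -> ncpoly L') (g : seq L' -> rat) p :
  peval g (plin f p) = peval (fun x => peval g (f x)) p.
Proof.
rewrite /plin {1}/peval big_flatten big_map; apply: eq_bigr => a _.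
exact: peval_pscale.
Qed.

Section Coefficients.
Variable L : eqType.
Implicit Types (g : seq L -> rat) (p q : ncpoly L).

Lemma peval_coef g p (S : seq (seq L)) :
  uniq S -> {subset map snd p <= S} ->
  peval g p = \sum_(u <- S) coef p u * g u.
Proof.
move=> uniqS pS.
rewrite (eq_bigr (fun u => \sum_(a <- p | a.2 == u) a.1 * g u)) => [|u _]; last first.
  by rewrite /coef mulr_suml.
rewrite (exchange_big_dep xpredT) //= /peval; apply: eq_big_seq => a ap.
have aS : a.2 \in S by apply: pS; apply: map_f.
rewrite -big_filter (eq_filter (fun u => eq_sym a.2 u)) filter_pred1_uniq //.
by rewrite big_seq1.
Qed.

Lemma peqP p q : peq p q <-> forall g, peval g p = peval g q.
Proof.
split=> [pq g|pq u].
  pose S := undup (map snd (p ++ q)).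
  have uniqS : uniq S := undup_uniq _.
  have pS : {subset map snd p <= S}.
    by move=> x xp; rewrite mem_undup map_cat mem_cat xp.
  have qS : {subset map snd q <= S}.
    by move=> x xq; rewrite mem_undup map_cat mem_cat xq orbT.
  rewrite (peval_coef g uniqS pS) (peval_coef g uniqS qS).
  by apply: eq_bigr => w _; rewrite pq.
have coefE r : coef r u = peval (fun x => (x == u)%:R) r.
  rewrite /coef /peval big_mkcond; apply: eq_bigr => a _ /=.
  by case: eqP; rewrite ?mulr1 ?mulr0.
by rewrite !coefE pq.
Qed.

Lemma peval_peq g p q : peq p q -> peval g p = peval g q.
Proof. by move/peqP. Qed.

End Coefficients.

Section Diamond.
Variables (n : nat) (s : mu n).
Local Notation D := (dia_word s).
Local Notation X := (pword [:: lx n]).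
Local Notation Y := (pword [:: ly (mu_one n)]).
Local Notation y1 := (ly (mu_one n)).

Lemma phi_word_rcons u (l : letterR n) :
  peq (phi_word (rcons u l)) (pmul (phi_word u) (phi_letter l)).
Proof.
apply/peqP; elim: u => [|a u IH] g /=; rewrite !peval_pmul.
  rewrite /pone peval_pword; apply: eq_peval => x.
  by rewrite peval_pword cats0.
apply: eq_peval => x; rewrite IH peval_pmul; apply: eq_peval => y.
by apply: eq_peval => w; rewrite catA.
Qed.

(* phi(x) + phi(y_1) = z + (delta(1) y_1 - y_1) = z - y_1 = x. *)
Lemma phi_letter_sum : peq (padd (phi_letter (lx n)) (phi_letter y1)) X.
Proof.
rewrite -[phi_letter (lx n)]/(zR n).
rewrite -[phi_letter y1]/(psub (pscale (delta (mu_one n)) Y) Y).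
apply/peqP => g; rewrite !(peval_padd, peval_psub, peval_pscale, peval_pword).
by rewrite /delta eqxx; ring.
Qed.

Lemma M_word_rcons_x u : M_word s (rcons u (lx n)) = rcons (M_word s u) (lx n).
Proof. by elim: u => [|[t|] u IH] //=; rewrite IH. Qed.

Lemma I_word_rcons_x acc u : I_word acc (rcons u (lx n)) = rcons (I_word acc u) (lx n).
Proof. by elim: u acc => [|[t|] u IH] acc //=; rewrite IH. Qed.

(* psi_s(u x) = psi_s(u) z, since phi(x) = z. *)
Lemma psi_word_rcons_x u : peq (psi_word s (rcons u (lx n))) (pmul (psi_word s u) (zR n)).
Proof. by rewrite /psi_word M_word_rcons_x I_word_rcons_x; apply: phi_word_rcons. Qed.

(* psi_s(phi(u)); for u the image of a word v of A_1 this is v <> 1. *)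
Definition psiphi (u : seq (letterR n)) := psi s (phi (pword u)).

Lemma peval_psiphi g u :
  peval g (psiphi u) = peval (fun x => peval g (psi_word s x)) (phi_word u).
Proof. by rewrite /psiphi !peval_plin peval_pword. Qed.

(* Identity (A) in the boundary case w = 1. *)
Lemma psiphi_rcons u :
  peq (padd (psiphi (rcons u (lx n))) (psiphi (rcons u y1))) (pmul (psiphi u) (zR n)).
Proof.
apply/peqP => g; rewrite peval_padd !peval_psiphi -peval_padd.
pose G x := peval g (psi_word s x).
have phi_sum : peq (padd (phi_word (rcons u (lx n))) (phi_word (rcons u y1)))
                   (pmul (phi_word u) X).
  apply/peqP => h; rewrite peval_padd !(peval_peq h (phi_word_rcons _ _)).
  rewrite !peval_pmul -pevalD; apply: eq_peval => x.
  by rewrite -peval_padd (peval_peq _ phi_letter_sum).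
rewrite (peval_peq G phi_sum) !peval_pmul peval_psiphi.
apply: eq_peval => x; rewrite peval_pword cats1.
by rewrite /G (peval_peq g (psi_word_rcons_x x)) peval_pmul.
Qed.

Lemma dia_nil_l w : D [::] w = pword w.
Proof. by rewrite /dia_word; case: w. Qed.

Lemma dia_nil_r v : peq (D v [::]) (psiphi (map (@emb1 n) v)).
Proof.
case: v => [|b v]; last by rewrite /dia_word addn0.
by apply/peqP => g; rewrite dia_nil_l peval_psiphi.
Qed.

(* The right-hand side of the defining recursion of the diamond product   *)
(* for the words vb and wl, in terms of a product F on shorter words.      *)
Definition dia_rec (F : seq letter1 -> seq (letterR n) -> ncpoly (letterR n))
    (v : seq letter1) (w : seq (letterR n)) (b : letter1) (l : letterR n) :=
  match b, l with
  | false, None => psub (pmul (F v (rcons w l)) X) (pmul (F (rcons v true) w) X)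
  | true, None => padd (pmul (F v (rcons w l)) Y) (pmul (F (rcons v true) w) X)
  | false, Some t =>
      if t == mu_one n then
        padd (pmul (F v (rcons w l)) X) (pmul (F (rcons v false) w) Y)
      else
        psub (padd (pmul (F v (rcons w l)) X)
                   (pmul (padd (F v (rcons w (lx n))) (F v (rcons w (ly t))))
                         (pword [:: ly t])))
             (pmul (F (rcons v true) w) (pword [:: ly t]))
  | true, Some t =>
      if t == mu_one n then
        psub (pmul (F v (rcons w l)) Y) (pmul (F (rcons v false) w) Y)
      else
        padd (psub (pmul (F v (rcons w l)) Y)
                   (pmul (padd (F v (rcons w (lx n))) (F v (rcons w (ly t))))
                         (pword [:: ly t])))
             (pmul (F (rcons v true) w) (pword [:: ly t]))
  end.

Lemma dia_fuel_step k v w b l :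
  dia_fuel s k.+1 (rcons v b) (rcons w l) = dia_rec (dia_fuel s k) v w b l.
Proof.
have [a [v' Ev]] : exists a v', rcons v b = a :: v'.
  by case: v => [|a v']; [exists b, [::] | exists a, (rcons v' b)].
have [c [w' Ew]] : exists c w', rcons w l = c :: w'.
  by case: w => [|c w']; [exists l, [::] | exists c, (rcons w' l)].
by rewrite {1}Ev {1}Ew /= -Ev -Ew !rev_rcons /= !revK.
Qed.

Lemma dia_step v w b l : D (rcons v b) (rcons w l) = dia_rec D v w b l.
Proof.
rewrite {1}/dia_word !size_rcons addSn addnS dia_fuel_step.
rewrite /dia_rec; case: b; case: l => [t|]; cbv beta iota;
  by rewrite /dia_word ?size_rcons ?addSn ?addnS.
Qed.

(* For w = 1 it is [psiphi_rcons]; otherwise the recursions for vx and vy *)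
(* with the same last letter of w add up to D(v, w) z, the rest cancels.  *)
Lemma dia_mulz_l v w :
  peq (padd (D (rcons v false) w) (D (rcons v true) w)) (pmul (D v w) (zR n)).
Proof.
apply/peqP => g; rewrite peval_padd peval_pmul_sum2.
case/lastP: w => [|w l].
  rewrite !(peval_peq _ (dia_nil_r _)) !map_rcons -peval_padd.
  by rewrite (peval_peq _ (psiphi_rcons _)) peval_pmul_sum2.
rewrite !dia_step /dia_rec; case: l => [t|]; cbv beta iota; first case: ifP => _;
  rewrite !(peval_psub, peval_padd, peval_pmul_sum2, peval_pmul_word); ring.
Qed.

(* By induction on v; the terms D(vb, w) z produced by the recursion are  *)
(* rewritten with (A).                                                     *)
Lemma dia_mulz_r v w :
  peq (padd (D v (rcons w (lx n))) (D v (rcons w y1))) (pmul (D v w) (zR n)).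
Proof.
apply/peqP; elim/last_ind: v => [|v b IH] g.
  by rewrite !dia_nil_l peval_padd peval_pmul_sum2 !peval_pword !cats1.
pose gx x := g (x ++ [:: lx n]); pose gy x := g (x ++ [:: y1]).
have IHx := IH gx; have IHy := IH gy.
have Ax := peval_peq gx (dia_mulz_l v w); have Ay := peval_peq gy (dia_mulz_l v w).
move: IHx IHy Ax Ay; rewrite peval_padd !dia_step peval_pmul_sum2 /dia_rec.
case: b; cbv beta iota; rewrite !(peval_psub, peval_padd, peval_pmul_sum2, peval_pmul_word);
  rewrite /gx /gy; lra.
Qed.

End Diamond.

Lemma peval_diamond n (s : mu n) g p q :
  peval g (diamond s p q) =
  peval (fun x => peval (fun y => peval g (dia_word s x y)) q) p.
Proof.
rewrite /diamond {1}/peval big_flatten big_flatten big_map /peval.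
apply: eq_bigr => a _; rewrite big_map mulr_sumr; apply: eq_bigr => b _.
rewrite -/(peval g (pscale (a.1 * b.1) (dia_word s a.2 b.2))) peval_pscale.
by rewrite mulrA.
Qed.

Theorem mainTheorem7 (n : nat) (s : mu n) (v : ncpoly letter1) (w : ncpoly (letterR n)) :
  peq (diamond s (pmul v z1) w) (diamond s v (pmul w (zR n))) /\
  peq (diamond s v (pmul w (zR n))) (pmul (diamond s v w) (zR n)).
Proof.
split; apply/peqP => g.
- rewrite !peval_diamond peval_pmul_sum2 -pevalD; apply: eq_peval => x.
  rewrite peval_pmul_sum2 -!pevalD; apply: eq_peval => y.
  rewrite -!peval_padd !cats1.
  by rewrite (peval_peq _ (dia_mulz_l _ _ _)) (peval_peq _ (dia_mulz_r _ _ _)).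
- rewrite peval_pmul_sum2 !peval_diamond -pevalD; apply: eq_peval => x.
  rewrite peval_pmul_sum2 -!pevalD; apply: eq_peval => y.
  by rewrite -!peval_padd !cats1 (peval_peq _ (dia_mulz_r _ _ _)) peval_pmul_sum2.
Qed.
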